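(* Let $M\ge1$, $\alpha\in(0,1)$, $R_{th}>0$ and $\varepsilon=2^{2R_{th}/(1-\alpha)}-1$. For link types $j\in\{SR,RD\}$ let IQI parameters $\xi_{t_j},\xi_{r_j}>0$, $\phi_{t_j},\phi_{r_j}\in\mathbb{R}$ be given (the same for all relays), with $\mu_{t_j}=\tfrac12(1+\xi_{t_j}e^{i\phi_{t_j}})$, $v_{t_j}=\tfrac12(1-\xi_{t_j}e^{-i\phi_{t_j}})$, $\mu_{r_j}=\tfrac12(1+\xi_{r_j}e^{-i\phi_{r_j}})$, $v_{r_j}=\tfrac12(1-\xi_{r_j}e^{i\phi_{r_j}})$, $p_j=|\mu_{t_j}\mu_{r_j}+v_{t_j}^*v_{r_j}|^2$, $q_j=|\mu_{r_j}v_{t_j}+\mu_{t_j}^*v_{r_j}|^2$, and assume $p_j-\varepsilon q_j>0$. Let $X_{SR_1},\dots,X_{SR_M},X_{R_1D},\dots,X_{R_MD}$ be independent, with $X_{SR_m}$ exponential of rate $\lambda_{SR}>0$ and $X_{R_mD}$ exponential of rate $\lambda_{RD}>0$ for all $m$. Let the estimation-error variances be $\sigma^2_{e_{SR}}=\sigma^2_{e_{RD}}=t>0$. For each $m$ define $$C^\infty_{SR_m}=\frac{1-\alpha}{2}\log_2\!\Big(1+\frac{X_{SR_m}p_{SR}}{\sigma^2_{e_{SR}}p_{SR}+X_{SR_m}q_{SR}+\sigma^2_{e_{SR}}q_{SR}}\Big),\quad C^\infty_{R_mD}=\frac{1-\alpha}{2}\log_2\!\Big(1+\frac{X_{R_mD}p_{RD}}{\sigma^2_{e_{RD}}p_{RD}+X_{R_mD}q_{RD}+\sigma^2_{e_{RD}}q_{RD}}\Big),$$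 and let $a=\arg\max_{1\le m\le M}C^\infty_{SR_m}$. Then $$\Pr\{\min(C^\infty_{SR_a},C^\infty_{R_aD})<R_{th}\}=1-\Big(1-\big(1-e^{-\lambda_{SR}H_3}\big)^M\Big)e^{-\lambda_{RD}H_4},$$ where $H_3=\dfrac{\varepsilon\sigma^2_{e_{SR}}(p_{SR}+q_{SR})}{p_{SR}-\varepsilon q_{SR}}$ and $H_4=\dfrac{\varepsilon\sigma^2_{e_{RD}}(p_{RD}+q_{RD})}{p_{RD}-\varepsilon q_{RD}}$.
   Context: Decode-and-forward relaying with $M$ relays and suboptimal relay selection: the relay $R_a$ is chosen to maximize the first-hop ($S\to R_m$) capacity. $X_j=|\hat h_j|^2$ are estimated Rayleigh channel gains, $\sigma^2_{e_j}$ channel-estimation-error variances, and $p_j,q_j$ are the I/Q-imbalance gain coefficients. The left-hand side is the asymptotic (high-SNR) outage probability; $z^*$ is complex conjugate, $i$ the imaginary unit. *)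

From HB Require Import structures.
From mathcomp Require Import all_boot all_order all_algebra.
From mathcomp Require Import all_classical all_reals all_analysis.
From mathcomp Require Import complex.
Set Implicit Arguments. Unset Strict Implicit. Unset Printing Implicit Defensive.
Import Order.TTheory GRing.Theory Num.Theory.
Local Open Scope classical_set_scope.
Local Open Scope complex_scope.
Local Open Scope ring_scope.

Definition cexpi {R : realType} (phi : R) : R[i] := Complex (cos phi) (sin phi).

Definition sqnorm {R : realType} (z : R[i]) : R := (Normc.normc z) ^+ 2.

Definition mu_t {R : realType} (xi phi : R) : R[i] := 2^-1 * (1 + xi%:C * cexpi phi).
Definition v_t  {R : realType} (xi phi : R) : R[i] := 2^-1 * (1 - xi%:C * cexpi (- phi)).
Definition mu_r {R : realType} (xi phi : R) : R[i] := 2^-1 * (1 + xi%:C * cexpi (- phi)).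
Definition v_r  {R : realType} (xi phi : R) : R[i] := 2^-1 * (1 - xi%:C * cexpi phi).

Definition pIQI {R : realType} (xit phit xir phir : R) : R :=
  sqnorm (mu_t xit phit * mu_r xir phir + conjc (v_t xit phit) * v_r xir phir).
Definition qIQI {R : realType} (xit phit xir phir : R) : R :=
  sqnorm (mu_r xir phir * v_t xit phit + conjc (mu_t xit phit) * v_r xir phir).

Definition log2 {R : realType} (x : R) : R := ln x / ln 2.

Definition Cinf {R : realType} (alpha sigma2 p q X : R) : R :=
  (1 - alpha) / 2 * log2 (1 + X * p / (sigma2 * p + X * q + sigma2 * q)).

Definition mutually_independent {d} {T : measurableType d} {R : realType}
  (P : probability T R) (I : finType) (X : I -> {RV P >-> R}) : Prop :=
  forall A : I -> set R, (forall i, measurable (A i)) ->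
    P (\bigcap_(i in [set: I]) (X i @^-1` A i)) = (\prod_(i : I) P (X i @^-1` A i))%E.

Definition is_exponential {d} {T : measurableType d} {R : realType}
  (P : probability T R) (X : {RV P >-> R}) (lam : R) : Prop :=
  forall A : set R, measurable A -> distribution P X A = exponential_prob lam A.
Arguments mutually_independent {d T R} P {I} X.
Arguments is_exponential {d T R} P X lam.

From HB Require Import structures.
From mathcomp Require Import all_boot all_order all_algebra.
From mathcomp Require Import all_classical all_reals all_analysis.
From mathcomp Require Import complex.
From mathcomp Require Import measurable_realfun exponential_distribution.
From mathcomp Require Import ring lra.
Import Order.TTheory GRing.Theory Num.Theory.
Local Open Scope classical_set_scope.
Local Open Scope ring_scope.

(* The capacity of a hop is an increasing function of its gain, so a hop is
   in outage exactly when its gain lies below the threshold H_3 (resp. H_4),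
   an event of probability 1 - exp (- lambda H) for an exponential gain.
   Since the selected relay maximises the first-hop capacity, its first hop
   is in outage iff all M first hops are, which has probability
   (1 - exp (- lambda_SR H_3)) ^ M.  The selection is a function of the
   first-hop gains only, so by Dynkin's pi-lambda theorem, starting from the
   product rule on rectangles, the event "relay m is selected and its first
   hop is fine" is independent of the gain of the second hop of relay m;
   summing over m gives the probability of no outage as
   (1 - (1 - exp (- lambda_SR H_3)) ^ M) exp (- lambda_RD H_4). *)

Lemma bigsetU_ordE {T : Type} n (F : 'I_n -> set T) :
  \big[setU/set0]_(i < n) F i = \bigcup_(i in [set: 'I_n]) F i.
Proof.
rewrite -bigcup_seq; apply/seteqP; split => w [i _ Fiw]; exists i => //.
by rewrite /= mem_index_enum.
Qed.

Section measurable_preimages.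
Context {d} {T : measurableType d}.

Lemma measurable_ler {R : realType} (f g : T -> R) :
  measurable_fun setT f -> measurable_fun setT g ->
  measurable [set x | f x <= g x].
Proof.
move=> mf mg; have := measurable_fun_ler mf mg measurableT (Y := [set true]) I.
by rewrite setTI preimage_true.
Qed.

Lemma measurable_ltr {R : realType} (f g : T -> R) :
  measurable_fun setT f -> measurable_fun setT g ->
  measurable [set x | f x < g x].
Proof.
move=> mf mg; have := measurable_fun_ltr mf mg measurableT (Y := [set true]) I.
by rewrite setTI preimage_true.
Qed.

Lemma measurable_finset_preimage (J : finType) (s : T -> {set J})
    (A : set {set J}) :
  (forall i, measurable [set w | i \in s w]) -> measurable (s @^-1` A).
Proof.
move=> ms.
have -> : s @^-1` A = \bigcup_(S in A) \bigcap_(i in [set: J])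
    [set w | (i \in s w) = (i \in S)].
  apply/seteqP; split => [w Asw|w [S AS sS]]; first by exists (s w).
  by rewrite /= (_ : s w = S) //; apply/setP => i; exact: sS.
apply: fin_bigcup_measurable; first exact: finite_finset.
move=> S _; apply: fin_bigcap_measurable; first exact: finite_finset.
move=> i _; case: (i \in S); first exact: ms.
rewrite (_ : [set w | _] = ~` [set w | i \in s w]); first exact/measurableC.
by apply/seteqP; split => w /=; case: (i \in s w).
Qed.

Lemma measurable_arg_max {R : realType} (J : finType) (i0 : J)
    (F : J -> T -> R) (A : set J) :
  (forall i, measurable_fun setT (F i)) ->
  measurable [set w | A (Order.arg_max i0 xpredT (F^~ w))].
Proof.
(* [arg max] picks the first maximizer, so it depends on w only through the
   set of maximizers. *)
move=> mF; pose maximizers w := [set i | [forall j, F j w <= F i w]]%SET.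
have -> : [set w | A (Order.arg_max i0 xpredT (F^~ w))] =
    maximizers @^-1` [set S : {set J} | A (odflt i0 [pick i in S])].
  apply/funext => w; congr (A (odflt _ _)); apply: eq_pick => i.
  by rewrite !inE.
apply: measurable_finset_preimage => i.
rewrite (_ : [set w | _] = \bigcap_(j in [set: J]) [set w | F j w <= F i w]).
  apply: fin_bigcap_measurable; first exact: finite_finset.
  by move=> j _; exact: measurable_ler.
apply/seteqP; split => w; rewrite /= inE.
  by move=> /forallP h j _; exact: h.
by move=> h; apply/forallP => j; exact: h.
Qed.

End measurable_preimages.

Section independence_g_sigma.
Local Open Scope ereal_scope.
Context {d} {T : measurableType d} {R : realType} (P : probability T R).
Variable B : set T.
Hypothesis mB : measurable B.

Lemma indep_setC (S : set T) : measurable S ->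
  P (S `&` B) = P S * P B -> P (~` S `&` B) = P (~` S) * P B.
Proof.
move=> mS PSB; rewrite probability_setC // setIC -setDE measureD //; last first.
  exact: le_lt_trans (probability_le1 P mB) (ltey 1).
change (P B - P (B `&` S) = (1 - P S) * P B); rewrite setIC PSB.
have fS : P S \is a fin_num by rewrite fin_num_measure.
have fB : P B \is a fin_num by rewrite fin_num_measure.
by rewrite -(fineK fS) -(fineK fB) -!EFinM -!EFinB; congr EFin; ring.
Qed.

Lemma indep_bigcup (F : (set T)^nat) : (forall k, measurable (F k)) ->
  trivIset setT F -> (forall k, P (F k `&` B) = P (F k) * P B) ->
  P (\bigcup_k F k `&` B) = P (\bigcup_k F k) * P B.
Proof.
move=> mF tF PFB; have fB : P B \is a fin_num by rewrite fin_num_measure.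
rewrite setI_bigcupl measure_bigcup //; last first.
- exact: trivIset_setIr.
- by move=> k _; exact: measurableI.
rewrite (eq_eseriesr (fun k _ => PFB k)) -(fineK fB).
under eq_eseriesr do rewrite muleC.
by rewrite nneseriesZl // muleC measure_bigcup.
Qed.

Lemma indep_g_sigma (G : set (set T)) :
  G `<=` measurable -> setI_closed G ->
  (forall S, G S -> P (S `&` B) = P S * P B) ->
  forall S, <<s G >> S -> measurable S /\ P (S `&` B) = P S * P B.
Proof.
move=> GM GI GP.
apply: (@dynkin_induction _ (g_sigma_algebraType G) G
  (fun S => measurable (S : set T) /\ P (S `&` B) = P S * P B)) => //.
- by split; [exact: measurableT|rewrite setTI probability_setT mul1e].
- by move=> S GS; split; [exact: GM|exact: GP].
- by move=> S _ [mS PSB]; split; [exact: measurableC|exact: indep_setC].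
- move=> F _ tF PF; split; first by apply: bigcup_measurable => k _; case: (PF k).
  by apply: indep_bigcup => // k; case: (PF k).
Qed.

End independence_g_sigma.

Section max_first_hop_selection.
Context {d} {T : measurableType d} {R : realType} {P : probability T R}.
Context {M : nat} {XSR XRD : 'I_M -> {RV P >-> R}}.
Hypothesis indep : mutually_independent P (fun k : 'I_M + 'I_M =>
  match k with inl m => XSR m | inr m => XRD m end).

Lemma probability_bigcap_hops (F K : 'I_M -> set R) :
  (forall i, measurable (F i)) -> (forall j, measurable (K j)) ->
  P (\bigcap_(i in [set: 'I_M]) XSR i @^-1` F i `&`
     \bigcap_(j in [set: 'I_M]) XRD j @^-1` K j) =
  (\prod_(i < M) P (XSR i @^-1` F i) * \prod_(j < M) P (XRD j @^-1` K j))%E.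
Proof.
move=> mF mK.
have := indep (fun k => match k with inl i => F i | inr j => K j end)
  ltac:(by case).
rewrite big_sumType /= => <-; congr (P _).
apply/seteqP; split => w.
  by move=> [FK1 FK2] [i|j] _ /=; [exact: FK1|exact: FK2].
by move=> FK; split => i _; [exact: (FK (inl i))|exact: (FK (inr i))].
Qed.

Lemma probability_bigcap_SR (F : 'I_M -> set R) :
  (forall i, measurable (F i)) ->
  P (\bigcap_(i in [set: 'I_M]) XSR i @^-1` F i) =
    (\prod_(i < M) P (XSR i @^-1` F i))%E.
Proof.
move=> mF; have := probability_bigcap_hops F (fun=> setT) mF (fun=> measurableT).
rewrite [X in _ `&` X](_ : _ = setT); last by apply/seteqP; split.
rewrite setIT => ->; rewrite [X in (_ * X)%E]big1 ?mule1 // => j _.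
by rewrite preimage_setT probability_setT.
Qed.

Definition SR_rectangles := [set S : set T | exists2 F : 'I_M -> set R,
  (forall i, measurable (F i)) & S = \bigcap_(i in [set: 'I_M]) XSR i @^-1` F i].

Lemma SR_rectangle_indep_RD m (K : set R) S : measurable K ->
  SR_rectangles S ->
  P (S `&` XRD m @^-1` K) = (P S * P (XRD m @^-1` K))%E.
Proof.
move=> mK [F mF ->]; pose Km j := if j == m then K else setT.
have mKm j : measurable (Km j) by rewrite /Km; case: ifP.
have KmE : \bigcap_(j in [set: 'I_M]) XRD j @^-1` Km j = XRD m @^-1` K.
  apply/seteqP; split => [w /(_ m I)|w Kw j _]; first by rewrite /Km eqxx.
  by rewrite /Km; case: eqP => [->|].
have PKm : (\prod_(j < M) P (XRD j @^-1` Km j))%E = P (XRD m @^-1` K).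
  rewrite (bigD1 m) //= /Km eqxx big1 ?mule1 // => j /negbTE ->.
  by rewrite preimage_setT probability_setT.
by rewrite -{1}KmE probability_bigcap_hops // PKm probability_bigcap_SR.
Qed.

Lemma g_sigma_SR_indep_RD m (K : set R) : measurable K ->
  forall S, <<s SR_rectangles >> S ->
  measurable S /\ P (S `&` XRD m @^-1` K) = (P S * P (XRD m @^-1` K))%E.
Proof.
move=> mK; apply: indep_g_sigma.
- exact: measurable_funPTI.
- move=> _ [F mF ->]; apply: fin_bigcap_measurable; first exact: finite_finset.
  by move=> i _; exact: measurable_funPTI.
- move=> _ _ [F mF ->] [F' mF' ->]; exists (fun i => F i `&` F' i).
    by move=> i; exact: measurableI.
  apply/seteqP; split => [w [FF' FF'w] i _|w FF'w].
    by split; [exact: FF'|exact: FF'w].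
  by split => i _; case: (FF'w i I).
- by move=> S; exact: SR_rectangle_indep_RD.
Qed.

Lemma measurable_SR_g_sigma i : measurable_fun
  (setT : set (g_sigma_algebraType SR_rectangles)) (XSR i : _ -> R).
Proof.
move=> _ Y mY; rewrite setTI; apply: sub_sigma_algebra.
exists (fun j => if j == i then Y else setT).
  by move=> j; case: ifP.
apply/seteqP; split => [w Yw j _|w /(_ i I)]; last by rewrite eqxx.
by case: eqP => [->|].
Qed.

Variable i0 : 'I_M.
Context {f g : R -> R} {Rth ps pr : R}.
Hypotheses (mf : measurable_fun setT f) (mg : measurable_fun setT g).
Hypothesis PSR : forall m, P (XSR m @^-1` [set x | f x < Rth]) = ps%:E.
Hypothesis PRD : forall m, P (XRD m @^-1` [set x | g x < Rth]) = pr%:E.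

Let selected w := Order.arg_max i0 xpredT (fun m => f (XSR m w)).
Let KS := [set x | f x < Rth].
Let KR := [set x | g x < Rth].
Let A m := [set w | selected w = m] `&` XSR m @^-1` ~` KS.
Let B m := XRD m @^-1` ~` KR.

Let mKS : measurable KS. Proof. exact: measurable_ltr. Qed.
Let mKR : measurable KR. Proof. exact: measurable_ltr. Qed.

Let outageE :
  [set w | Num.min (f (XSR (selected w) w)) (g (XRD (selected w) w)) < Rth] =
  ~` \big[setU/set0]_(m < M) (A m `&` B m).
Proof.
rewrite bigsetU_ordE; apply/seteqP; split => w /=.
  move=> + [m _ [[/= <- nS] nR]].
  by rewrite gt_min => /orP[]; [exact: nS|exact: nR].
move=> nAB; rewrite ltNge; apply/negP; rewrite le_min => /andP[hS hR].
apply: nAB; exists (selected w) => //.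
by split; [split|] => //=; apply/negP; rewrite -leNgt.
Qed.

Let selected_okE :
  \big[setU/set0]_(m < M) A m = ~` \bigcap_(i in [set: 'I_M]) XSR i @^-1` KS.
Proof.
have selected_max w j : f (XSR j w) <= f (XSR (selected w) w).
  by rewrite /selected; case: arg_maxP => // i _; apply.
rewrite bigsetU_ordE; apply/seteqP; split => w /=.
  by move=> [m _ [/= <- nS]] allS; apply: nS; exact: allS.
move=> nS; exists (selected w) => //; split => //= aS; apply: nS => j _.
exact: le_lt_trans (selected_max w j) aS.
Qed.

Let g_sigma_A m : <<s SR_rectangles >> (A m).
Proof.
apply: (@measurableI _ (g_sigma_algebraType SR_rectangles)).
  apply: (measurable_arg_max (T := g_sigma_algebraType SR_rectangles) _ i0
    (fun i w => f (XSR i w)) [set m]) => i.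
  exact: measurableT_comp mf (measurable_SR_g_sigma i).
by have := measurable_SR_g_sigma m measurableT _ (measurableC mKS); rewrite setTI.
Qed.

Theorem max_selection_outage :
  P [set w | Num.min (f (XSR (selected w) w)) (g (XRD (selected w) w)) < Rth] =
    (1 - (1 - ps ^+ M) * (1 - pr))%:E.
Proof.
have mA m : measurable (A m).
  by have [] := g_sigma_SR_indep_RD m _ measurableT _ (g_sigma_A m).
have mB m : measurable (B m) by exact/measurable_funPTI/measurableC.
have PAB m : P (A m `&` B m) = (P (A m) * (1 - pr)%:E)%E.
  have [_ ->] := g_sigma_SR_indep_RD m _ (measurableC mKR) _ (g_sigma_A m).
  rewrite /B preimage_setC probability_setC ?PRD //.
  exact: measurable_funPTI mKR.
have tA : trivIset setT A by move=> i j _ _ [w [[/= <- _] [/= <- _]]].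
rewrite outageE probability_setC; last first.
  by apply: bigsetU_measurable => m _; exact: measurableI.
rewrite measure_bigsetU_ord //; last 2 first.
- by move=> m; exact: measurableI.
- exact: trivIset_setIr.
rewrite (eq_bigr _ (fun m _ => PAB m)) -ge0_sume_distrl //.
have PA : (\sum_(m < M) P (A m))%E = (1 - ps ^+ M)%:E.
  rewrite -measure_bigsetU_ord // selected_okE.
  apply: etrans (probability_setC P _) _.
    apply: fin_bigcap_measurable; first exact: finite_finset.
    by move=> i _; exact: measurable_funPTI mKS.
  rewrite probability_bigcap_SR; last by move=> i; exact: mKS.
  under eq_bigr do rewrite PSR.
  by rewrite prodEFin prodr_const card_ord -EFinB.
by rewrite PA -EFinM -EFinB.
Qed.

End max_first_hop_selection.

Lemma measurable_inv {R : realType} : measurable_fun [set: R] (@GRing.inv R).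
Proof.
have -> : [set: R] = (`]-oo, 0[ `|` `]0, +oo[) `|` [set 0].
  apply/seteqP; split => x // _.
  by case: (ltrgtP x 0) => hx; [left; left|left; right|right] => //=;
    rewrite in_itv /= ?hx.
apply/measurable_funU => //; first exact: measurableU.
split; last exact: measurable_fun_set1.
apply/measurable_funU => //; split; apply: open_continuous_measurable_fun;
  try exact: interval_open.
  move=> x; rewrite inE /= in_itv /= => hx.
  by apply: inv_continuous; rewrite lt_eqF.
move=> x; rewrite inE /= in_itv /= andbT => hx.
by apply: inv_continuous; rewrite gt_eqF.
Qed.

Section asymptotic_capacity.
Context {R : realType}.
Variables (alpha t p q : R).

Lemma measurable_Cinf : measurable_fun [set: R] (Cinf alpha t p q).
Proof.
apply: measurable_funM => //; apply: measurable_funM => //.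
apply: measurableT_comp; first exact: measurable_ln.
apply: measurable_funD => //.
apply: measurable_funM; first exact: measurable_funM.
apply: measurableT_comp; first exact: measurable_inv.
by apply: measurable_funD => //; apply: measurable_funD => //;
  exact: measurable_funM.
Qed.

Lemma sinr_threshold_gt0 (Rth : R) : alpha < 1 -> 0 < Rth ->
  0 < expR (2 * Rth / (1 - alpha) * ln 2) - 1.
Proof.
move=> a1 Rth0.
by rewrite subr_gt0 expR_gt1 mulr_gt0 ?divr_gt0 ?mulr_gt0 ?subr_gt0 ?ln_gt0 ?ltr1n.
Qed.

Lemma Cinf_lt_sinr (Rth x : R) : alpha < 1 ->
  let sinr := x * p / (t * p + x * q + t * q) in 0 < 1 + sinr ->
  (Cinf alpha t p q x < Rth) = (sinr < expR (2 * Rth / (1 - alpha) * ln 2) - 1).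
Proof.
move=> a1 sinr sinr_gt; have ln2 : 0 < ln (2 : R) by rewrite ln_gt0 // ltr1n.
set k := (1 - alpha) / 2 / ln 2.
have k0 : 0 < k by rewrite /k !divr_gt0 // subr_gt0.
have -> : Cinf alpha t p q x = k * ln (1 + sinr).
  by rewrite /Cinf /log2 /k; field; rewrite gt_eqF.
have RthE : Rth = k * (2 * Rth / (1 - alpha) * ln 2).
  by rewrite /k; field; rewrite !gt_eqF // subr_gt0.
by rewrite {1}RthE ltr_pM2l // -[(ln _ < _)]ltr_expR lnK ?posrE // ltrBrDl.
Qed.

Lemma sinr_lt (eps x : R) :
  0 < t * p + x * q + t * q -> 0 < p - eps * q ->
  (x * p / (t * p + x * q + t * q) < eps) =
    (x < eps * t * (p + q) / (p - eps * q)).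
Proof.
move=> D0 hp; rewrite ltr_pdivrMr // ltr_pdivlMr // -subr_gt0.
by rewrite -[X in _ = X]subr_gt0; congr (0 < _); ring.
Qed.

Lemma Cinf_lt_threshold (Rth x : R) : alpha < 1 -> 0 < Rth -> 0 < t -> 0 <= q ->
  let eps := expR (2 * Rth / (1 - alpha) * ln 2) - 1 in
  0 < p - eps * q -> 0 <= x ->
  (Cinf alpha t p q x < Rth) = (x < eps * t * (p + q) / (p - eps * q)).
Proof.
move=> a1 Rth0 t0 q0 eps hp x0.
have eps0 : 0 < eps by exact: sinr_threshold_gt0.
have p0 : 0 < p by have := mulr_ge0 (ltW eps0) q0; lra.
have D0 : 0 < t * p + x * q + t * q.
  have := mulr_gt0 t0 p0; have := mulr_ge0 x0 q0.
  by have := mulr_ge0 (ltW t0) q0; lra.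
rewrite Cinf_lt_sinr // ?sinr_lt //.
by have := divr_ge0 (mulr_ge0 x0 (ltW p0)) (ltW D0); lra.
Qed.

End asymptotic_capacity.

Section exponential_prob_itv.
Context {R : realType}.
Variable lam : R.
Hypothesis lam_ge0 : 0 <= lam.

Let mpdf : measurable_fun setT (EFin \o exponential_pdf lam).
Proof. by apply/measurable_EFinP; exact: measurable_exponential_pdf. Qed.

Let pdf_ge0 x : (0 <= (exponential_pdf lam x)%:E)%E.
Proof. by rewrite lee_fin; exact: exponential_pdf_ge0. Qed.

Lemma exponential_prob_setIge0 (K : set R) : measurable K ->
  exponential_prob lam K = exponential_prob lam (K `&` `[0, +oo[).
Proof.
move=> mK; rewrite -[in LHS](setIT K) -(setUv `[0, +oo[%classic) setIUr.
rewrite /exponential_prob ge0_integral_setU //; first last.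
- by apply/disj_setPS => x [[_ + ] [_ ]].
- exact: measurable_funTS.
- by apply: measurableI => //; exact: measurableC.
- exact: measurableI.
rewrite [X in (_ + X)%E]integral0_eq ?adde0 // => x [_] /=.
by rewrite in_itv /= andbT => /negP; rewrite -ltNge => /lt0_exponential_pdf ->.
Qed.

Lemma exponential_prob_itv0o (H : R) : 0 < H ->
  exponential_prob lam `[0, H[ = (1 - expR (- lam * H))%:E.
Proof.
move=> H0; have := exponential_prob_itv0c lam H0.
rewrite -(@setUitv1 _ _ _ _ true) ?bnd_simp ?ltW // /exponential_prob.
rewrite ge0_integral_setU //; first last.
- by apply/disj_setPS => x [/=]; rewrite in_itv /= => /andP[_ /lt_eqF/eqP].
- exact: measurable_funTS.
by rewrite integral_set1 adde0.
Qed.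

End exponential_prob_itv.

Lemma exponential_Cinf_outage {d} {T : measurableType d} {R : realType}
    {P : probability T R} {X : {RV P >-> R}} {lam alpha Rth t p q : R} :
  0 <= lam -> alpha < 1 -> 0 < Rth -> 0 < t -> 0 <= q ->
  let eps := expR (2 * Rth / (1 - alpha) * ln 2) - 1 in
  0 < p - eps * q -> is_exponential P X lam ->
  P (X @^-1` [set x | Cinf alpha t p q x < Rth]) =
    (1 - expR (- lam * (eps * t * (p + q) / (p - eps * q))))%:E.
Proof.
move=> lam0 a1 Rth0 t0 q0 eps hp Xexp.
have mK : measurable [set x | Cinf alpha t p q x < Rth].
  exact: measurable_ltr (measurable_Cinf _ _ _ _) (measurable_cst _).
have eps0 : 0 < eps by exact: sinr_threshold_gt0.
have H0 : 0 < eps * t * (p + q) / (p - eps * q).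
  by rewrite divr_gt0 ?mulr_gt0 //; have := mulr_ge0 (ltW eps0) q0; lra.
rewrite -[LHS]/(distribution P X [set x | Cinf alpha t p q x < Rth]) Xexp //.
rewrite exponential_prob_setIge0 // -exponential_prob_itv0o //.
congr exponential_prob; apply/seteqP; split => x /=; rewrite !in_itv /= andbT.
  by move=> [+ x0]; rewrite Cinf_lt_threshold // x0 => ->.
by move=> /andP[x0 xH]; rewrite Cinf_lt_threshold.
Qed.

Theorem corollary3 (R : realType) (d : measure_display) (T : measurableType d)
  (P : probability T R) (M : nat) (hM : (0 < M)%N)
  (alpha Rth : R) (halpha : 0 < alpha < 1) (hRth : 0 < Rth)
  (xit_SR phit_SR xir_SR phir_SR xit_RD phit_RD xir_RD phir_RD : R)
  (hxi : [/\ 0 < xit_SR, 0 < xir_SR, 0 < xit_RD & 0 < xir_RD])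
  (lamSR lamRD t : R) (hlamSR : 0 < lamSR) (hlamRD : 0 < lamRD) (ht : 0 < t)
  (XSR XRD : 'I_M -> {RV P >-> R}) :
  let eps := expR ((2 * Rth / (1 - alpha)) * ln 2) - 1 in
  let pSR := pIQI xit_SR phit_SR xir_SR phir_SR in
  let qSR := qIQI xit_SR phit_SR xir_SR phir_SR in
  let pRD := pIQI xit_RD phit_RD xir_RD phir_RD in
  let qRD := qIQI xit_RD phit_RD xir_RD phir_RD in
  0 < pSR - eps * qSR -> 0 < pRD - eps * qRD ->
  mutually_independent P (fun k : 'I_M + 'I_M =>
    match k with inl m => XSR m | inr m => XRD m end) ->
  (forall m, is_exponential P (XSR m) lamSR) ->
  (forall m, is_exponential P (XRD m) lamRD) ->
  let CSR m w := Cinf alpha t pSR qSR (XSR m w) in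
  let CRD m w := Cinf alpha t pRD qRD (XRD m w) in
  let a w := Order.arg_max (Ordinal hM) xpredT (fun m => CSR m w) in
  let H3 := eps * t * (pSR + qSR) / (pSR - eps * qSR) in
  let H4 := eps * t * (pRD + qRD) / (pRD - eps * qRD) in
  P [set w | Num.min (CSR (a w) w) (CRD (a w) w) < Rth] =
    (1 - (1 - (1 - expR (- lamSR * H3)) ^+ M) * expR (- lamRD * H4))%:E.
Proof.
move=> eps pSR qSR pRD qRD hSR hRD indep expSR expRD CSR CRD a H3 H4.
have [_ alpha_lt1] := andP halpha.
have sqnorm_ge0 (z : R[i]) : 0 <= sqnorm z by exact: sqr_ge0.
have outSR m := exponential_Cinf_outage (ltW hlamSR) alpha_lt1 hRth ht
  (sqnorm_ge0 _) hSR (expSR m).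
have outRD m := exponential_Cinf_outage (ltW hlamRD) alpha_lt1 hRth ht
  (sqnorm_ge0 _) hRD (expRD m).
rewrite (max_selection_outage indep (Ordinal hM) (measurable_Cinf _ _ _ _)
  (measurable_Cinf _ _ _ _) outSR outRD).
by congr EFin; ring.
Qed.
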